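(* Let $M$ be a finite set of alternatives, $\mathcal{R}$ the set of weak preference orders on $M$, and $\varphi:\mathcal{R}\to\Delta(M)$ a mechanism. If $\varphi$ is strategyproof, then it is separation upper invariant and separation lower invariant.
   Context: A preference order is a complete, transitive relation $R$ on $M$; $a\,I\,b$ means $a\,R\,b$ and $b\,R\,a$; $a\,P\,b$ means $a\,R\,b$ and not $b\,R\,a$. Write $R$ as $M_1\,P\,\cdots\,P\,M_K$ where $(M_k)$ are the nonempty indifference classes ordered so that $a\,P\,b$ for $a\in M_k$, $b\in M_{k'}$, $k<k'$. For $A\subseteq M$, $\varphi_A(R)=\sum_{a\in A}(\varphi(R))_a$. A lottery $x$ first order-stochastically dominates $y$ at $R$ if $\sum_{j: j R a}x_j\ge\sum_{j: j R a}y_j$ for all $a\in M$. $\varphi$ is strategyproof if $\varphi(R)$ first order-stochastically dominates $\varphi(R')$ at $R$ for all $R,R'\in\mathcal{R}$. A separation is a pair $(R,R')$ such that, with $R=M_1\,P\,\cdots\,P\,M_K$, there are $\kappa\in\{1,\dots,K\}$ and a partition of $M_\kappa$ into disjoint nonempty $M_\kappa^1,M_\kappa^2$ with $R'=M_1\,P'\,\cdots\,P'\,M_{\kappa-1}\,P'\,M_\kappa^1\,P'\,M_\kappa^2\,P'\,M_{\kappa+1}\,P'\,\cdots\,P'\,M_K$ (indifference within each listed set). $\varphi$ is separation upper invariant if for every separation $(R,R')$, $\varphi_{M_k}(R)=\varphi_{M_k}(R')$ for all $k\in\{1,\dots,\kappa-1\}$; separation lower invariant if for every separation, $\varphi_{M_k}(R)=\varphi_{M_k}(R')$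 for all $k\in\{\kappa+1,\dots,K\}$. *)

From mathcomp Require Import all_boot all_order all_algebra.
Set Implicit Arguments. Unset Strict Implicit. Unset Printing Implicit Defensive.
Import Order.TTheory GRing.Theory Num.Theory.
Local Open Scope ring_scope.

Section Defs.
Variable M : finType.
Variable R : realFieldType.

(* A (candidate) preference relation on M: R a b means "a is weakly preferred to b". *)
Definition prefT := {ffun M -> {ffun M -> bool}}.

Definition weak_order (P : prefT) : Prop :=
  (forall a b, P a b || P b a) /\ (forall a b c, P a b -> P b c -> P a c).

Definition lottery (x : {ffun M -> R}) : Prop :=
  (forall a, 0 <= x a) /\ \sum_(a : M) x a = 1.

Definition strict (P : prefT) a b := P a b && ~~ P b a.

Definition indiff (P : prefT) (a : M) : {set M} := [set b | P a b && P b a].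

Definition probA (phi : prefT -> {ffun M -> R}) (A : {set M}) (P : prefT) : R :=
  \sum_(a in A) phi P a.

Definition fosd (P : prefT) (x y : {ffun M -> R}) : Prop :=
  forall a, \sum_(j | P j a) y j <= \sum_(j | P j a) x j.

Definition strategyproof (phi : prefT -> {ffun M -> R}) : Prop :=
  forall P P', weak_order P -> weak_order P' -> fosd P (phi P) (phi P').

(* (P, P') is a separation splitting the indifference class C of P into C1 P' C2. *)
Definition separation (P P' : prefT) (C C1 C2 : {set M}) : Prop :=
  weak_order P /\ (exists a, C = indiff P a) /\
  C1 :&: C2 = set0 /\ C1 :|: C2 = C /\ C1 != set0 /\ C2 != set0 /\
  (forall a b, P' a b =
        if (a \in C) && (b \in C) then (a \in C1) || (b \in C2) else P a b).

Definition sep_upper_invariant (phi : prefT -> {ffun M -> R}) : Prop :=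
  forall P P' C C1 C2, separation P P' C C1 C2 ->
    forall a c, c \in C -> strict P a c ->
      probA phi (indiff P a) P = probA phi (indiff P a) P'.

Definition sep_lower_invariant (phi : prefT -> {ffun M -> R}) : Prop :=
  forall P P' C C1 C2, separation P P' C C1 C2 ->
    forall a c, c \in C -> strict P c a ->
      probA phi (indiff P a) P = probA phi (indiff P a) P'.

End Defs.

From mathcomp Require Import all_boot all_order all_algebra.
Set Implicit Arguments. Unset Strict Implicit. Unset Printing Implicit Defensive.
Import Order.TTheory GRing.Theory Num.Theory.
Local Open Scope ring_scope.

(* Strategyproofness applied in both directions between P and P' gives every
   upper contour set {j | P j b} the same probability under phi P and phi P':
   a separation keeps it an upper contour set of P', namely that of b itself,
   or of any alternative of the lower part C2 when b lies in the upper part C1.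
   An indifference class of P is an upper contour set minus the strict upper
   contour set above it, and the latter is empty or the upper contour set of
   the lowest alternative strictly above.  Hence every indifference class of P,
   the split one included, keeps its probability. *)

Section WeakOrder.
Variables (M : finType) (P : prefT M).
Hypothesis wP : weak_order P.

Lemma weak_order_refl a : P a a.
Proof. by case: wP => tot _; have := tot a a; rewrite orbb. Qed.

Lemma le_strict_trans a b c : P a b -> strict P b c -> strict P a c.
Proof.
case: wP => _ tr Pab /andP[Pbc nPcb]; rewrite /strict (tr _ _ _ Pab Pbc) /=.
by apply: contra nPcb => /tr; apply.
Qed.

Lemma strict_contour_cases a :
  (forall j, ~~ strict P j a) \/ exists b, forall j, strict P j a = P j b.
Proof.
have [b0 b0a | none] := pickP (fun j => strict P j a); last first.
  by left=> j; rewrite none.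
case: (wP) => tot tr; right.
have ord_refl : reflexive [rel x y | P y x] by move=> x; apply: weak_order_refl.
have ord_trans : transitive [rel x y | P y x].
  by move=> y x z /= Pyx Pzy; apply: tr Pzy Pyx.
have ord_total : total [rel x y | P y x] by move=> x y; apply: tot.
have [b ba b_least] :=
  @extremumP _ _ _ _ (strict P ^~ a) id ord_refl ord_trans ord_total b0a.
exists b => j; apply/idP/idP => [ja | jb]; first exact: b_least.
exact: le_strict_trans jb ba.
Qed.

End WeakOrder.

Lemma indiff_sum (M : finType) (V : zmodType) (P : prefT M) a (x : {ffun M -> V}) :
  \sum_(j in indiff P a) x j = \sum_(j | P j a) x j - \sum_(j | strict P j a) x j.
Proof.
rewrite (bigID (P a) (P ^~ a)) /= addrK.
by apply: eq_bigl => j; rewrite inE andbC.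
Qed.

Section Separation.
Variables (M : finType) (P P' : prefT M) (C C1 C2 : {set M}).
Hypothesis sep : separation P P' C C1 C2.

Let wP : weak_order P. Proof. by case: sep. Qed.

Lemma separation_class_le x y : x \in C -> y \in C -> P x y.
Proof.
case: sep => [[_ tr] [[a0 ->] _]].
by rewrite !inE => /andP[_ Pxa0] /andP[Pa0y _]; apply: tr Pxa0 Pa0y.
Qed.

Lemma separation_class_convex x y z :
  P x y -> P y z -> x \in C -> z \in C -> y \in C.
Proof.
case: sep => [[_ tr] [[a0 ->] _]] Pxy Pyz.
rewrite !inE => /andP[Pa0x _] /andP[_ Pza0].
by rewrite (tr _ _ _ Pa0x Pxy) (tr _ _ _ Pyz Pza0).
Qed.

Lemma separation_subset1 x : x \in C1 -> x \in C.
Proof. by case: sep => [_ [_ [_ [<- _]]]] x1; rewrite inE x1. Qed.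

Lemma separation_subset2 x : x \in C2 -> x \in C.
Proof. by case: sep => [_ [_ [_ [<- _]]]] x2; rewrite inE x2 orbT. Qed.

Lemma separation_in1 x : x \in C -> (x \in C1) = (x \notin C2).
Proof.
case: sep => [_ [_ [disj [<- _]]]] xC; apply/idP/idP => [x1 | /negPf x2].
  by apply/negP => x2; have := in_set0 x; rewrite -disj inE x1 x2.
by move: xC; rewrite inE x2 orbF.
Qed.

Lemma separation_relE x y : P' x y = P x y && ~~ ((x \in C2) && (y \in C1)).
Proof.
case: (sep) => [_ [_ [_ [_ [_ [_ ->]]]]]].
case: ifP => [/andP[xC yC] | notC].
  rewrite separation_class_le // (separation_in1 yC) (separation_in1 xC).
  by rewrite negb_and negbK orbC.
case x2: (x \in C2); last by rewrite andbT.
case y1: (y \in C1); last by rewrite andbT.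
by rewrite separation_subset2 ?separation_subset1 in notC.
Qed.

Lemma separation_weak_order : weak_order P'.
Proof.
case: wP => tot tr; split=> [x y | x y z]; rewrite !separation_relE.
  have [/andP[xC yC] | notC] := boolP ((x \in C) && (y \in C)).
    rewrite !separation_class_le // (separation_in1 xC) (separation_in1 yC).
    by case: (x \in C2); case: (y \in C2).
  have crossF u v : ~~ ((u \in C) && (v \in C)) -> (u \in C2) && (v \in C1) = false.
    by apply: contraNF => /andP[/separation_subset2 -> /separation_subset1 ->].
  by rewrite !crossF // 1?andbC // !andbT tot.
move=> /andP[Pxy nxy] /andP[Pyz nyz]; rewrite (tr _ _ _ Pxy Pyz) /=.
apply/negP => /andP[x2 z1].
have yC : y \in C.
  apply: (separation_class_convex Pxy Pyz).
    exact: separation_subset2.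
  exact: separation_subset1.
have [y2 | y1] := boolP (y \in C2); first by rewrite y2 z1 in nyz.
by rewrite x2 (separation_in1 yC) y1 in nxy.
Qed.

Lemma separation_common_contour b :
  exists2 b', (forall j, P j b' = P j b) & (forall j, P' j b' = P j b').
Proof.
have [b1 | b1] := boolP (b \in C1); last first.
  by exists b => // j; rewrite separation_relE (negbTE b1) andbF andbT.
have [c c2] : exists c, c \in C2 by apply/set0Pn; case: sep => [_ [_ [_ [_ [_ []]]]]].
have [bC cC] := (separation_subset1 b1, separation_subset2 c2).
exists c => j; last by rewrite separation_relE (separation_in1 cC) c2 andbF andbT.
case: wP => _ tr; apply/idP/idP => Pj; apply: tr Pj _; exact: separation_class_le.
Qed.

Variables (R : realFieldType) (phi : prefT M -> {ffun M -> R}).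
Hypothesis sp : strategyproof phi.

Lemma strategyproof_contour_sum b :
  \sum_(j | P j b) phi P j = \sum_(j | P j b) phi P' j.
Proof.
have [b' Pb'E P'b'E] := separation_common_contour b.
have wP' := separation_weak_order.
rewrite -!(eq_bigl _ _ Pb'E); apply/le_anti/andP; split.
  by have := sp wP' wP b'; rewrite !(eq_bigl _ _ P'b'E).
exact: sp wP wP' b'.
Qed.

Lemma strategyproof_separation_class a :
  probA phi (indiff P a) P = probA phi (indiff P a) P'.
Proof.
rewrite /probA !indiff_sum strategyproof_contour_sum; congr (_ - _).
have [none | [b strictE]] := strict_contour_cases wP a.
  by rewrite !big_pred0 // => j; apply/negbTE.
by rewrite !(eq_bigl _ _ strictE) strategyproof_contour_sum.
Qed.

End Separation.

Theorem lemma1 (M : finType) (R : realFieldType)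
  (phi : prefT M -> {ffun M -> R})
  (hphi : forall P, weak_order P -> lottery (phi P)) :
  strategyproof phi -> sep_upper_invariant phi /\ sep_lower_invariant phi.
Proof.
move=> sp; split=> P P' C C1 C2 sep a _ _ _;
  exact: (strategyproof_separation_class sep sp a).
Qed.
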